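(* Let $N$ be a Niemeier lattice with roots, $N^{-}$ the lattice $N$ with negated form $\langle\ ,\ \rangle^{-}_N$, $R$ the set of $(-2)$-vectors of $N^{-}$, and $\Theta=\Theta_1\sqcup\dots\sqcup\Theta_K$ a simple root system of $\langle R\rangle$ decomposed into its connected components. Put $A_i=\langle\Theta_i\rangle^\vee/\langle\Theta_i\rangle$, and regard $N^{-}/\langle R\rangle\subset A_1\times\dots\times A_K$ via $N^{-}\subset\langle R\rangle^\vee=\langle\Theta_1\rangle^\vee\oplus\dots\oplus\langle\Theta_K\rangle^\vee$. For a codeword $\gamma\in N^{-}/\langle R\rangle$ with components $\gamma_i\in A_i$, let $\tilde\gamma_i\in\langle\Theta_i\rangle^\vee$ be the canonical representative of $\gamma_i$ and put $v_\gamma=\tilde\gamma_1+\dots+\tilde\gamma_K\in\langle R\rangle^\vee$. Then $v_\gamma\in N^{-}$.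
   Context: A Niemeier lattice is an even unimodular positive-definite lattice of rank $24$; ''with roots'' means it has vectors of norm $2$. A simple root system of $\langle R\rangle$ is a subset $\Theta\subset R$ forming a $\mathbb{Z}$-basis of $\langle R\rangle$ whose dual graph (edge between $r\ne r'$ iff $\langle r,r'\rangle^{-}_N=1$; distinct elements have $\langle r,r'\rangle^-_N\in\{0,1\}$) is a disjoint union of ordinary $ADE$ Dynkin diagrams; $\Theta_i$ are the vertex sets of its connected components. For $M$ a lattice, $M^\vee=\{x\in M\otimes\mathbb{Q}:\langle x,v\rangle\in\mathbb{Z}\ \forall v\in M\}$. Canonical representative: let $\Sigma=\{r_1,\dots,r_k\}$ be a connected simple root system (e.g. some $\Theta_i$), let $\mu=\sum_j m(r_j)r_j$ be the highest root of $\langle\Sigma\rangle$ with respect to $\Sigma$ (coefficients $m(r_j)$ positive integers), let $J(\Sigma)=\{j:m(r_j)=1\}$, and let $r_1^\vee,\dots,r_k^\vee$ be the basis of $\langle\Sigma\rangle^\vee$ dual to $r_1,\dots,r_k$. The map $j\mapsto r_j^\vee\bmod\langle\Sigma\rangle$ is a bijection from $J(\Sigma)$ onto the nonzero elements of $\langle\Sigma\rangle^\vee/\langle\Sigma\rangle$. The canonical representative of $\alpha\in\langle\Sigma\rangle^\vee/\langle\Sigma\rangle$ is $0$ if $\alpha=0$, and $r_j^\vee$ for the unique $j\in J(\Sigma)$ with $r_j^\vee\equiv\alpha$ otherwise. *)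

From mathcomp Require Import all_boot all_order all_algebra.
Set Implicit Arguments. Unset Strict Implicit. Unset Printing Implicit Defensive.
Import Order.TTheory GRing.Theory Num.Theory.
Local Open Scope ring_scope.

(* The lattice N is modelled as Z^24 inside Q^24, with Gram matrix G (integer
   entries) of the form <,>_N.  Vectors are rational row vectors. *)
Notation vec := 'rV[rat]_24.

Definition Gq (G : 'M[int]_24) : 'M[rat]_24 := map_mx (fun z : int => z%:~R) G.

Definition formN (G : 'M[int]_24) (x y : vec) : rat := (x *m Gq G *m y^T) 0 0.
Definition formNm (G : 'M[int]_24) (x y : vec) : rat := - formN G x y.

Definition inN (x : vec) : bool := [forall i, x 0 i \is a Num.int].

Definition niemeier (G : 'M[int]_24) : Prop :=
  [/\ G^T = G,
      (forall x : vec, inN x -> exists k : int, formN G x x = (2 * k)%:~R),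
      (\det G = 1 \/ \det G = -1)
    & (forall x : vec, x != 0 -> 0 < formN G x x)].

Definition isroot (G : 'M[int]_24) (x : vec) : bool := inN x && (formNm G x x == -2).

Definition has_roots (G : 'M[int]_24) : Prop := exists r, isroot G r.

Definition zspan (s : seq vec) (x : vec) : Prop :=
  exists c : seq int, x = \sum_(i < size s) s`_i *~ (c`_i).
Definition qspan (s : seq vec) (x : vec) : Prop :=
  exists c : seq rat, x = \sum_(i < size s) (c`_i) *: s`_i.

Definition in_rootlattice (G : 'M[int]_24) (x : vec) : Prop :=
  exists s : seq vec, all (isroot G) s /\ zspan s x.

Definition zfree (s : seq vec) : Prop :=
  forall c : seq int, size c = size s ->
    \sum_(i < size s) s`_i *~ (c`_i) = 0 -> all (fun z => z == 0) c.

Definition dual_edge (G : 'M[int]_24) : rel vec := fun r r' => formNm G r r' == 1.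

(* ADE Dynkin diagrams on vertex set {0,..,n-1}.  A_n is the path;
   D_n (n >= 4) is the path 0-..-(n-2) plus the edge {n-3, n-1};
   E_n (n = 6,7,8) is the path 0-..-(n-2) plus the edge {2, n-1}. *)
Definition path_adj (a b : nat) : bool := (a.+1 == b) || (b.+1 == a).
Definition branch_adj (n br a b : nat) : bool :=
  (path_adj a b && (a < n.-1)%N && (b < n.-1)%N)
  || ((a == br) && (b == n.-1)) || ((b == br) && (a == n.-1)).

Inductive ADEtype := TypeA of nat | TypeD of nat | TypeE of nat.

Definition ADE_valid (t : ADEtype) : bool :=
  match t with
  | TypeA n => (1 <= n)%N
  | TypeD n => (4 <= n)%N
  | TypeE n => (n \in [:: 6; 7; 8])%N
  end.
Definition ADE_rank (t : ADEtype) : nat :=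
  match t with TypeA n | TypeD n | TypeE n => n end.
Definition ADE_adj (t : ADEtype) (a b : nat) : bool :=
  match t with
  | TypeA n => path_adj a b
  | TypeD n => branch_adj n (n - 3) a b
  | TypeE n => branch_adj n 2 a b
  end.

Definition is_ADE_diagram (G : 'M[int]_24) (Si : seq vec) : Prop :=
  exists (t : ADEtype) (s : seq vec),
    [/\ ADE_valid t, perm_eq s Si, size s = ADE_rank t
      & forall a b, (a < size s)%N -> (b < size s)%N -> a != b ->
          dual_edge G s`_a s`_b = ADE_adj t a b].

Definition connected_in (G : 'M[int]_24) (Si : seq vec) : Prop :=
  forall r r', r \in Si -> r' \in Si ->
    exists p : seq vec, [/\ all (mem Si) p, path (dual_edge G) r p & last r p = r'].

(* Theta = Theta_1 ⊔ ... ⊔ Theta_K, given as the list of its connected components,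
   is a simple root system of <R>. *)
Definition simple_root_system (G : 'M[int]_24) (Theta : seq (seq vec)) : Prop :=
  let T := flatten Theta in
  [/\ uniq T,
      all (isroot G) T,
      (forall x, in_rootlattice G x -> zspan T x)
    & zfree T] /\
  [/\
      (forall r r', r \in T -> r' \in T -> r != r' ->
          formNm G r r' = 0 \/ formNm G r r' = 1),
      (forall i, (i < size Theta)%N ->
          [/\ nth [::] Theta i != [::], connected_in G (nth [::] Theta i)
            & is_ADE_diagram G (nth [::] Theta i)])
    & (forall i j r r', (i < size Theta)%N -> (j < size Theta)%N -> i != j ->
          r \in nth [::] Theta i -> r' \in nth [::] Theta j -> formNm G r r' = 0)].

Definition highest_root_coeffs (G : 'M[int]_24) (Sigma : seq vec) (m : seq nat) : Prop :=
  [/\ size m = size Sigma,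
      all (fun k => (0 < k)%N) m,
      formNm G (\sum_(j < size Sigma) (nth 0%N m j)%:R *: Sigma`_j)
               (\sum_(j < size Sigma) (nth 0%N m j)%:R *: Sigma`_j) = -2
    & (forall c : seq int, size c = size Sigma ->
         let rho := \sum_(j < size Sigma) Sigma`_j *~ (c`_j) in
         formNm G rho rho = -2 ->
         forall j, (j < size Sigma)%N -> c`_j <= (nth 0%N m j)%:Z)].

Definition dual_basis_elt (G : 'M[int]_24) (Sigma : seq vec) (j : nat) (w : vec) : Prop :=
  qspan Sigma w /\
  (forall k, (k < size Sigma)%N -> formNm G w Sigma`_k = (j == k)%:R).

Definition canon_rep (G : 'M[int]_24) (Sigma : seq vec) (y w : vec) : Prop :=
  (zspan Sigma y /\ w = 0) \/
  (~ zspan Sigma y /\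
     exists m : seq nat, highest_root_coeffs G Sigma m /\
       exists j, [/\ (j < size Sigma)%N, nth 0%N m j = 1%N, dual_basis_elt G Sigma j w
                   & zspan Sigma (w - y)]).

(* The canonical representative w_i of gamma_i is congruent to the component
   x_i of x modulo <Theta_i>, a sublattice of N.  Hence
   v_gamma = x - sum_i (x_i - w_i) is a difference of vectors of N. *)

From HB Require Import structures.
From mathcomp Require Import all_boot all_order all_algebra.
Set Implicit Arguments. Unset Strict Implicit. Unset Printing Implicit Defensive.
Import GRing.Theory Num.Theory.
Local Open Scope ring_scope.

Lemma inN_zmod_closed : zmod_closed inN.
Proof.
split=> [|u v /forallP Nu /forallP Nv]; apply/forallP=> i; rewrite !mxE //.
exact: rpredB.
Qed.

HB.instance Definition _ := GRing.isZmodClosed.Build vec inN inN_zmod_closed.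

Lemma zspanN s x : zspan s x -> zspan s (- x).
Proof.
case=> c ->; exists (map -%R c); rewrite -sumrN; apply: eq_bigr => i _.
rewrite -mulrNz; congr (_ *~ _).
have [ic | ci] := ltnP i (size c); first by rewrite (nth_map 0).
by rewrite !nth_default ?size_map // oppr0.
Qed.

Lemma zspan_inN s x : all inN s -> zspan s x -> inN x.
Proof.
by move=> /all_nthP sN [c ->]; apply: rpred_sum => i _; apply/rpredMz/sN.
Qed.

Lemma simple_root_component_inN G Theta i :
  simple_root_system G Theta -> (i < size Theta)%N -> all inN (nth [::] Theta i).
Proof.
case=> [[_ rootsT _ _] _] ltiT; apply/allP=> r r_i.
have rT : r \in flatten Theta.
  by apply/flattenP; exists (nth [::] Theta i); rewrite ?mem_nth.
by case/andP: (allP rootsT r rT).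
Qed.

Lemma canon_rep_zspanB G Sigma y w : canon_rep G Sigma y w -> zspan Sigma (y - w).
Proof.
case=> [[y_Sigma ->] | [_ [_ [_ [_ [_ _ _ wy_Sigma]]]]]]; first by rewrite subr0.
by rewrite -opprB; apply: zspanN.
Qed.

Theorem proposition7p4 (G : 'M[int]_24)
  (HN : niemeier G) (Hroots : has_roots G)
  (Theta : seq (seq vec)) (HTheta : simple_root_system G Theta)
  (x : vec) (Hx : inN x)
  (xs : seq vec) (Hxs_size : size xs = size Theta)
  (Hxs_comp : forall i, (i < size Theta)%N -> qspan (nth [::] Theta i) xs`_i)
  (Hxs_sum : x = \sum_(i < size Theta) xs`_i)
  (ws : seq vec) (Hws_size : size ws = size Theta)
  (Hws : forall i, (i < size Theta)%N -> canon_rep G (nth [::] Theta i) xs`_i ws`_i) :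
  inN (\sum_(i < size Theta) ws`_i).
Proof.
have -> : \sum_(i < size Theta) ws`_i = x - \sum_(i < size Theta) (xs`_i - ws`_i).
  by rewrite Hxs_sum sumrB opprB addrC subrK.
apply: rpredB => //; apply: rpred_sum => i _.
have sN := simple_root_component_inN HTheta (ltn_ord i).
exact: zspan_inN sN (canon_rep_zspanB (Hws i (ltn_ord i))).
Qed.
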